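(* Let $A\in\mathbb{R}^{n\times n}$, $B\in\mathbb{R}^{n\times k}$ and $F\in\mathbb{R}^{k\times n}$ be arbitrary. For $C\in\mathbb{R}^{m\times n}$ let $\Omega(C,F)=[C;\,C(A+BF);\,\dots;\,C(A+BF)^{n-1}]$ and let $\mathcal{V}^*(C)$ be the maximal $(A,B)$-invariant subspace contained in $\operatorname{Ker}C$. Let $BR1_a=\arg\min_{C\in\mathbb{R}^{m\times n}}\dim\operatorname{Ker}\Omega(C,F)$ and $BR2X_a=\arg\min_{C\in\mathbb{R}^{m\times n}}\dim\mathcal{V}^*(C)$. Then for every $C_1\in BR2X_a$ and every $C_2\in BR1_a$, $\dim\mathcal{V}^*(C_1)\ge\dim\operatorname{Ker}\Omega(C_2,F)$.
   Context: A subspace $\mathcal{V}\subseteq\mathbb{R}^n$ is $(A,B)$-invariant if there exists a matrix $F'$ with $(A+BF')\mathcal{V}\subseteq\mathcal{V}$. Among all $(A,B)$-invariant subspaces contained in $\operatorname{Ker}C$ there is a maximal one, $\mathcal{V}^*(C)$. *)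

(* Conventions: vectors of R^n are row vectors 'rV_n
   (a column vector x corresponds to x^T); a subspace of R^n is the row space
   of a matrix V : 'M_n.  M x  corresponds to  x^T *m M^T. *)
From HB Require Import structures.
From mathcomp Require Import all_boot all_order all_algebra.
From mathcomp Require Import reals.
Set Implicit Arguments. Unset Strict Implicit. Unset Printing Implicit Defensive.
Import Order.TTheory GRing.Theory Num.Theory.
Local Open Scope ring_scope.

Section Defs.
Variables (R : realType) (n k m : nat).

Definition KerM (p : nat) (C : 'M[R]_(p, n)) : 'M[R]_n := kermx C^T.

Definition ABinvariant (A : 'M[R]_n) (B : 'M[R]_(n, k)) (V : 'M[R]_n) : Prop :=
  exists F' : 'M[R]_(k, n), (V *m (A + B *m F')^T <= V)%MS.

Definition is_Vstar (A : 'M[R]_n) (B : 'M[R]_(n, k)) (C : 'M[R]_(m, n))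
    (V : 'M[R]_n) : Prop :=
  [/\ ABinvariant A B V, (V <= KerM C)%MS &
      forall W : 'M[R]_n, ABinvariant A B W -> (W <= KerM C)%MS -> (W <= V)%MS].

Definition Omega (A : 'M[R]_n) (B : 'M[R]_(n, k)) (F : 'M[R]_(k, n))
    (C : 'M[R]_(m, n)) : 'M[R]_(\sum_(i < n) m, n) :=
  \mxcol_(i < n) (C *m (A + B *m F) ^+ i).

Definition dimKerOmega A B F C : nat := \rank (KerM (Omega A B F C)).

End Defs.

(* Ker Omega(C, F) is the unobservable subspace of the pair (C, A + BF); by
   Cayley-Hamilton it is (A + BF)-invariant, and it lies in Ker C, so it is an
   (A, B)-invariant subspace of Ker C and hence contained in V^*(C).  For C2
   minimizing dim Ker Omega this gives
   dim Ker Omega(C2, F) <= dim Ker Omega(C1, F) <= dim V^*(C1). *)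
From HB Require Import structures.
From mathcomp Require Import all_boot all_order all_algebra.
From mathcomp Require Import reals.
Import Order.TTheory GRing.Theory Num.Theory.
Local Open Scope ring_scope.

Lemma Cayley_Hamilton_expr (R : comNzRingType) n (M : 'M[R]_n) :
  M ^+ n = - \sum_(i < n) (char_poly M)`_i *: M ^+ i.
Proof.
case: n M => [|n] M; first by rewrite [LHS]flatmx0 [RHS]flatmx0.
have CH := Cayley_Hamilton M.
rewrite -[char_poly M]coefK poly_def size_char_poly rmorph_sum big_ord_recr /= in CH.
have /monicP := char_poly_monic M; rewrite /lead_coef size_char_poly /= => lead1.
have horner_mx_ZXn c i : horner_mx M (c *: 'X^i) = c *: M ^+ i.
  by rewrite horner_mxZ rmorphXn /= horner_mx_X.
rewrite lead1 horner_mx_ZXn scale1r (eq_bigr _ (fun i _ => horner_mx_ZXn _ _)) in CH.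
by apply/eqP; rewrite -addr_eq0 addrC CH.
Qed.

Section Unobservable.
Local Set Implicit Arguments.
Variables (K : fieldType) (n m : nat) (M : 'M[K]_n) (C : 'M[K]_(m, n)).

Definition unobsmx : 'M[K]_n := kermx (\mxcol_(i < n) (C *m M ^+ i))^T.

Lemma sub_unobsmxP p (X : 'M[K]_(p, n)) :
  (X <= unobsmx)%MS <-> forall i : 'I_n, X *m (C *m M ^+ i)^T = 0.
Proof.
rewrite sub_kermx tr_mxcol mul_mxrow; split => [/eqP X0 i | X0].
  by rewrite -[LHS](mxrowK (fun i => X *m (C *m M ^+ i)^T) i) X0 submxrow0.
by apply/eqP; rewrite (eq_mxrow (B_ := fun _ => 0)) ?mxrow0.
Qed.

Lemma unobsmx_sub_ker : (unobsmx <= kermx C^T)%MS.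
Proof.
have [n0 | n_gt0] := posnP n.
  (* n = 0 occurs in the types, so argue through row_full instead of substituting. *)
  apply/submx_full; rewrite /row_full eqn_leq rank_leq_col.
  by rewrite (leq_trans (_ : n <= 0)%N) // n0.
apply/sub_kermxP.
have /sub_unobsmxP/(_ (Ordinal n_gt0)) := submx_refl unobsmx.
by rewrite expr0 mulmx1.
Qed.

Lemma unobsmx_annihilates_expr p (X : 'M[K]_(p, n)) :
  (X <= unobsmx)%MS -> forall i, X *m (C *m M ^+ i)^T = 0.
Proof.
move=> /sub_unobsmxP X0 i; elim/ltn_ind: i => i IHi.
have [lt_in | le_ni] := ltnP i n; first exact: (X0 (Ordinal lt_in)).
have -> : C *m M ^+ i = - \sum_(j < n) (char_poly M)`_j *: (C *m M ^+ (i - n + j)).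
  rewrite -{1}(subnK le_ni) exprD Cayley_Hamilton_expr mulrN mulr_sumr mulmxN.
  rewrite mulmx_sumr; congr (- _); apply: eq_bigr => j _.
  by rewrite exprD -!mulmxE !scalemxAr.
rewrite raddfN raddf_sum /= mulmxN mulmx_sumr big1 ?oppr0 // => j _.
by rewrite linearZ /= -scalemxAr IHi ?scaler0 // -{2}(subnK le_ni) ltn_add2l.
Qed.

Lemma unobsmx_stable : stablemx unobsmx M^T.
Proof.
apply/sub_unobsmxP => i; have expSr : M ^+ i *m M = M ^+ i.+1 by rewrite exprSr.
by rewrite -mulmxA -trmx_mul -[C *m _ *m M]mulmxA expSr unobsmx_annihilates_expr.
Qed.

End Unobservable.

Section KerOmega.
Local Set Implicit Arguments.
Variables (R : realType) (n k m : nat).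
Variables (A : 'M[R]_n) (B : 'M[R]_(n, k)) (F : 'M[R]_(k, n)) (C : 'M[R]_(m, n)).

(* KerM (Omega A B F C) is convertible to unobsmx (A + B *m F) C. *)
Lemma KerOmega_ABinvariant : ABinvariant A B (KerM (Omega A B F C)).
Proof. by exists F; apply: unobsmx_stable. Qed.

Lemma KerOmega_sub_Vstar V : is_Vstar A B C V -> (KerM (Omega A B F C) <= V)%MS.
Proof.
by case=> _ _ Vmax; apply: Vmax; [apply: KerOmega_ABinvariant | apply: unobsmx_sub_ker].
Qed.

Lemma dimKerOmega_le_rank_Vstar V :
  is_Vstar A B C V -> (dimKerOmega A B F C <= \rank V)%N.
Proof. by move/KerOmega_sub_Vstar; apply: mxrankS. Qed.

End KerOmega.

Theorem lemma4 (R : realType) (n k m : nat)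
    (A : 'M[R]_n) (B : 'M[R]_(n, k)) (F : 'M[R]_(k, n))
    (C1 C2 : 'M[R]_(m, n)) (V1 : 'M[R]_n) :
  (* V1 = V^*(C1), and C1 ∈ BR2X_a *)
  is_Vstar A B C1 V1 ->
  (forall (C : 'M[R]_(m, n)) (V : 'M[R]_n), is_Vstar A B C V ->
     (\rank V1 <= \rank V)%N) ->
  (* C2 ∈ BR1_a *)
  (forall C : 'M[R]_(m, n), (dimKerOmega A B F C2 <= dimKerOmega A B F C)%N) ->
  (dimKerOmega A B F C2 <= \rank V1)%N.
Proof.
move=> Vstar_C1 _ C2_min.
exact: leq_trans (C2_min C1) (dimKerOmega_le_rank_Vstar F Vstar_C1).
Qed.
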